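(* Let $E$ be any graph, let $V\subseteq E^0$, and let $H\subseteq E^0$ be a hereditary set such that $\overline{V}\subseteq H\subseteq R(T(V))$. For $v\in H$, let $P_v(T(V))$ be the set of paths of $E$ originating at $v$ and terminating at a vertex of $T(V)$ such that no vertex of the path, except its range, lies in $T(V)$. Then the following are equivalent: (1) $H=\overline{V}$; (2) the set $H\setminus T(V)$ contains no infinite emitters, and every infinite path all of whose vertices lie in $H$ contains a vertex of $T(V)$; (3) the set $P_v(T(V))$ is finite for every $v\in H$.
   Context: A (directed) graph $E=(E^0,E^1,\mathbf{s},\mathbf{r})$ has vertex set $E^0$, edge set $E^1$ (of arbitrary cardinality) and source and range maps $\mathbf{s},\mathbf{r}:E^1\to E^0$. A sink is a vertex emitting no edges, an infinite emitter is a vertex emitting infinitely many edges, and a vertex is regular if it is neither. A path is a single vertex or a finite sequence of edges $e_1\dots e_n$ with $\mathbf{r}(e_i)=\mathbf{s}(e_{i+1})$; an infinite path is an infinite such sequence; $p^0$ denotes the set of vertices on a (finite or infinite) path $p$. Write $u\geq v$ if there is a path from $u$ to $v$. For $V\subseteq E^0$, $T(V)=\{u\in E^0: v\geq u \text{ for some } v\in V\}$ and $R(V)=\{u\in E^0: u\geq v\text{ for some }v\in V\}$. A set $H\subseteq E^0$ is hereditary if $T(H)\subseteq H$, and saturated if every regular vertex $v$ with $\mathbf{r}(\mathbf{s}^{-1}(v))\subseteq H$ lies in $H$. For $V\subseteq E^0$, $\overline{V}$ denotes the smallest hereditary and saturated set containing $V$ (equivalently, the smallest saturated set containing $T(V)$).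 *)

From Stdlib Require Import List.
Import ListNotations.
Set Implicit Arguments.

Section Graph.
Variables (Vx Ed : Type) (src rng : Ed -> Vx).

Definition sink (v : Vx) : Prop := forall e, src e <> v.

Definition inf_emitter (v : Vx) : Prop :=
  ~ exists l : list Ed, forall e, src e = v -> In e l.

Definition regular (v : Vx) : Prop := ~ sink v /\ ~ inf_emitter v.

(* a finite path is given by its source vertex u and its edge list es;
   es = [] is the vertex path u *)
Fixpoint is_path (u : Vx) (es : list Ed) : Prop :=
  match es with
  | [] => True
  | e :: es' => src e = u /\ is_path (rng e) es'
  end.

Fixpoint path_end (u : Vx) (es : list Ed) : Vx :=
  match es with
  | [] => u
  | e :: es' => path_end (rng e) es'
  end.

Fixpoint path_vertices (u : Vx) (es : list Ed) : list Vx :=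
  match es with
  | [] => [u]
  | e :: es' => u :: path_vertices (rng e) es'
  end.

Definition geq (u v : Vx) : Prop :=
  exists es, is_path u es /\ path_end u es = v.

Definition Tset (S : Vx -> Prop) (u : Vx) : Prop := exists v, S v /\ geq v u.
Definition Rset (S : Vx -> Prop) (u : Vx) : Prop := exists v, S v /\ geq u v.

Definition subset (A B : Vx -> Prop) : Prop := forall x, A x -> B x.
Definition set_eq (A B : Vx -> Prop) : Prop := forall x, A x <-> B x.

Definition hereditary (H : Vx -> Prop) : Prop := subset (Tset H) H.

Definition saturated (H : Vx -> Prop) : Prop :=
  forall v, regular v -> (forall e, src e = v -> H (rng e)) -> H v.

Definition hs_closure (S : Vx -> Prop) (u : Vx) : Prop :=
  forall H, hereditary H -> saturated H -> subset S H -> H u.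

Definition inf_path (f : nat -> Ed) : Prop := forall n, rng (f n) = src (f (S n)).

(* vertices of an infinite path are s(f n), n >= 0 (ranges are also sources) *)
Definition inf_path_in (H : Vx -> Prop) (f : nat -> Ed) : Prop :=
  forall n, H (src (f n)) /\ H (rng (f n)).

Fixpoint avoids_before_end (T : Vx -> Prop) (u : Vx) (es : list Ed) : Prop :=
  match es with
  | [] => True
  | e :: es' => ~ T u /\ avoids_before_end T (rng e) es'
  end.

Definition Pv (T : Vx -> Prop) (v : Vx) (es : list Ed) : Prop :=
  is_path v es /\ T (path_end v es) /\ avoids_before_end T v es.

Definition finite_paths (P : list Ed -> Prop) : Prop :=
  exists l : list (list Ed), forall es, P es -> In es l.

End Graph.

(* The closure of V is the least saturated set containing T(V), whose vertices
   are those of T(V) and, inductively, the regular vertices all of whose edges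
   lead into it.  Such a vertex has finitely many edges, no
   infinite path through it avoids T(V), and by induction it has only finitely
   many first-hitting paths into T(V).  Conversely, if v lies in H but outside some
   hereditary saturated K containing V, then v is not a sink (it reaches T(V),
   which lies in K), so saturation of K yields an edge from v to another vertex of
   H outside K as soon as v emits finitely many edges.  Iterating this escape
   either builds an infinite path in H avoiding T(V), or arbitrarily long paths in
   P_v(T(V)); the other two conditions each rule this out. *)
From Stdlib Require Import List Classical ClassicalEpsilon Lia.
Import ListNotations.
Set Implicit Arguments.

Section Paths.
Variables (Vx Ed : Type) (src rng : Ed -> Vx).

Lemma geq_refl u : geq src rng u u.
Proof. exists []; simpl; auto. Qed.

Lemma geq_edge e : geq src rng (src e) (rng e).
Proof. exists [e]; simpl; auto. Qed.

Lemma geq_trans u v w : geq src rng u v -> geq src rng v w -> geq src rng u w.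
Proof.
  intros [es [hp he]]; revert u hp he.
  induction es as [|e es IH]; intros u hp he; simpl in *.
  - subst; auto.
  - destruct hp as [hs hp]; intros hvw.
    destruct (IH _ hp he hvw) as [c [hc hce]].
    exists (e :: c); simpl; auto.
Qed.

Lemma hereditaryP (K : Vx -> Prop) :
  hereditary src rng K <-> (forall e, K (src e) -> K (rng e)).
Proof.
  split.
  - intros hK e he; apply hK; exists (src e); split; [exact he | apply geq_edge].
  - intros hK w [u [hu [es [hp he]]]]; subst w; revert u hu hp.
    induction es as [|e es IH]; intros u hu hp; simpl in *; [exact hu|].
    destruct hp as [hs hp]; apply IH; [apply hK; rewrite hs; exact hu | exact hp].
Qed.

Lemma Tset_self S u : S u -> Tset src rng S u.
Proof. intros hu; exists u; split; [exact hu | apply geq_refl]. Qed.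

Lemma Tset_hereditary S : hereditary src rng (Tset src rng S).
Proof.
  intros w [u [[v [hv hvu]] huw]]; exists v; split; [exact hv|].
  eapply geq_trans; eauto.
Qed.

Lemma Tset_sub_hereditary S K :
  hereditary src rng K -> subset S K -> subset (Tset src rng S) K.
Proof. intros hK hSK w [v [hv hvw]]; apply hK; exists v; auto. Qed.

Lemma Rset_not_sink T v : Rset src rng T v -> ~ T v -> ~ sink src v.
Proof.
  intros [w [hw [[|e es] [hp he]]]] hv hsink; simpl in *.
  - subst; contradiction.
  - exact (hsink e (proj1 hp)).
Qed.

Lemma Pv_cons T v e es :
  Pv src rng T v (e :: es) <-> ~ T v /\ src e = v /\ Pv src rng T (rng e) es.
Proof. unfold Pv; simpl; tauto. Qed.

Lemma Pv_in_T T v es : T v -> Pv src rng T v es -> es = [].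
Proof.
  intros hv; destruct es as [|e es]; [reflexivity|].
  rewrite Pv_cons; tauto.
Qed.

Lemma Pv_of_Rset T u : Rset src rng T u -> exists es, Pv src rng T u es.
Proof.
  intros [w [hw [es [hp he]]]]; subst w; revert u hp hw.
  induction es as [|e es IH]; intros u hp hT.
  - exists []; unfold Pv; simpl; auto.
  - destruct (classic (T u)) as [hu | hu].
    + exists []; unfold Pv; simpl; auto.
    + destruct hp as [hs hp]; destruct (IH _ hp hT) as [c hc].
      exists (e :: c); rewrite Pv_cons; subst u; auto.
Qed.

Lemma finite_paths_bounded (P : list Ed -> Prop) :
  finite_paths P -> exists m, forall es, P es -> length es <= m.
Proof.
  intros [L hL].
  assert (hmax : exists m, forall es, In es L -> length es <= m).
  { clear hL; induction L as [|a L [m hm]]; [exists 0; intros es []|].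
    exists (max (length a) m); intros es [<- | hin]; [lia|].
    specialize (hm _ hin); lia. }
  destruct hmax as [m hm]; exists m; auto.
Qed.

Lemma finite_paths_cons (l : list Ed) (Q : Ed -> list Ed -> Prop) :
  (forall e, In e l -> finite_paths (Q e)) ->
  finite_paths (fun es => exists e es', In e l /\ Q e es' /\ es = e :: es').
Proof.
  induction l as [|a l IH]; intros hQ.
  - exists []; intros es (e & es' & [] & _).
  - destruct (hQ a (or_introl eq_refl)) as [La hLa].
    destruct IH as [L hL]; [intros e he; apply hQ; right; exact he|].
    exists (map (cons a) La ++ L); intros es (e & es' & [<- | hin] & hq & ->).
    + apply in_or_app; left; apply in_map; auto.
    + apply in_or_app; right; apply hL; exists e, es'; auto.
Qed.

(* The paths in P_u(T) of length at least one are determined by their first edge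
   and a path in P_{r(e)}(T); this is what makes their finiteness force u to
   emit finitely many edges. *)
Lemma finite_Pv_not_inf_emitter T u :
  finite_paths (Pv src rng T u) -> ~ T u ->
  (forall e, src e = u -> Rset src rng T (rng e)) -> ~ inf_emitter src u.
Proof.
  intros [L hL] hu hreach hinf; apply hinf.
  exists (flat_map (fun es => match es with [] => [] | e :: _ => [e] end) L).
  intros e he; apply in_flat_map.
  destruct (Pv_of_Rset (hreach e he)) as [c hc].
  exists (e :: c); split; [apply hL; rewrite Pv_cons; auto | left; reflexivity].
Qed.

Lemma long_Pv_of_step T (P : Vx -> Prop) :
  (forall u, P u -> ~ T u) ->
  (forall u, P u -> Rset src rng T u) ->
  (forall u, P u -> exists e, src e = u /\ P (rng e)) ->
  forall n u, P u -> exists es, Pv src rng T u es /\ n <= length es.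
Proof.
  intros hPT hreach hstep; induction n as [|n IH]; intros u hu.
  - destruct (Pv_of_Rset (hreach u hu)) as [es hes]; exists es; split; [exact hes | lia].
  - destruct (hstep u hu) as [e [he hre]]; destruct (IH _ hre) as [es [hes hlen]].
    exists (e :: es); rewrite Pv_cons; simpl; split; [auto | lia].
Qed.

Lemma inf_path_of_step (P : Vx -> Prop) v :
  (forall u, P u -> exists e, src e = u /\ P (rng e)) -> P v ->
  exists f, inf_path src rng f /\ inf_path_in src rng P f.
Proof.
  intros hstep hv; destruct (hstep v hv) as [e0 [he0 hr0]].
  pose (next u := epsilon (inhabits e0) (fun e => src e = u /\ P (rng e))).
  assert (hnext : forall u, P u -> src (next u) = u /\ P (rng (next u)))
    by (intros u hu; exact (epsilon_spec _ _ (hstep u hu))).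
  pose (f := fix f n := match n with 0 => e0 | S n => next (rng (f n)) end).
  assert (hrng : forall n, P (rng (f n))).
  { induction n as [|n IH]; [exact hr0 | exact (proj2 (hnext _ IH))]. }
  exists f; split.
  - intros n; symmetry; exact (proj1 (hnext _ (hrng n))).
  - intros n; split; [|exact (hrng n)]; destruct n as [|n]; simpl.
    + rewrite he0; exact hv.
    + rewrite (proj1 (hnext _ (hrng n))); exact (hrng n).
Qed.

End Paths.

Section SatClosure.
Variables (Vx Ed : Type) (src rng : Ed -> Vx).

(* The least saturated set containing T; for T = T(V) it is the closure of V. *)
Inductive sat_closure (T : Vx -> Prop) : Vx -> Prop :=
| sat_closure_base v : T v -> sat_closure T v
| sat_closure_step v : regular src v ->
    (forall e, src e = v -> sat_closure T (rng e)) -> sat_closure T v.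

Lemma sat_closure_hereditary T :
  hereditary src rng T -> hereditary src rng (sat_closure T).
Proof.
  intros hT; apply hereditaryP; intros e he.
  inversion he as [v hv | v hreg hall]; subst.
  - apply sat_closure_base; revert hv; apply hereditaryP; exact hT.
  - apply hall; reflexivity.
Qed.

Lemma hs_closure_sub_sat_closure V :
  subset (hs_closure src rng V) (sat_closure (Tset src rng V)).
Proof.
  intros u hu; apply hu.
  - apply sat_closure_hereditary, Tset_hereditary.
  - intros v hreg hall; apply sat_closure_step; auto.
  - intros v hv; apply sat_closure_base, Tset_self; exact hv.
Qed.

Lemma sat_closure_regular T v : sat_closure T v -> ~ T v -> regular src v.
Proof. intros [w hw | w hreg _] hv; [contradiction | exact hreg]. Qed.

Lemma sat_closure_inf_path T f :
  sat_closure T (src (f 0)) -> inf_path src rng f -> exists n, T (src (f n)).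
Proof.
  remember (src (f 0)) as v eqn:hv; intros hsat; revert f hv.
  induction hsat as [v hT | v _ _ IH]; intros f hv hf.
  - exists 0; subst; exact hT.
  - destruct (IH (f 0) (eq_sym hv) (fun n => f (S n))) as [n hn].
    + exact (hf 0).
    + intros n; apply hf.
    + exists (S n); exact hn.
Qed.

Lemma sat_closure_finite_Pv T v : sat_closure T v -> finite_paths (Pv src rng T v).
Proof.
  induction 1 as [v hT | v hreg _ IH].
  - exists [[]]; intros es hes; rewrite (Pv_in_T hT hes); left; reflexivity.
  - destruct (classic (T v)) as [hT | hT].
    + exists [[]]; intros es hes; rewrite (Pv_in_T hT hes); left; reflexivity.
    + destruct hreg as [_ hfin]; apply NNPP in hfin; destruct hfin as [l hl].
      destruct (finite_paths_cons l (fun e es => src e = v /\ Pv src rng T (rng e) es))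
        as [L hL].
      { intros e _; destruct (classic (src e = v)) as [he | he].
        - destruct (IH e he) as [Le hLe]; exists Le; intros es [_ hes]; auto.
        - exists []; intros es [he' _]; contradiction. }
      exists L; intros [|e es] hes; [exfalso; exact (hT (proj1 (proj2 hes)))|].
      apply hL; rewrite Pv_cons in hes; exists e, es; intuition.
Qed.

End SatClosure.

Section Escape.
Variables (Vx Ed : Type) (src rng : Ed -> Vx) (V H : Vx -> Prop).
Hypothesis hH : hereditary src rng H.
Hypothesis hHR : subset H (Rset src rng (Tset src rng V)).

Lemma escape_edge K :
  hereditary src rng K -> saturated src rng K -> subset V K ->
  forall u, H u -> ~ K u -> ~ inf_emitter src u ->
  exists e, src e = u /\ H (rng e) /\ ~ K (rng e).
Proof.
  intros hK hsat hVK u hu hku hfin.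
  pose proof (Tset_sub_hereditary hK hVK) as hTK.
  apply NNPP; intros hnone; apply hku, hsat.
  - split; [|exact hfin].
    apply (Rset_not_sink (hHR hu)); intros hT; exact (hku (hTK _ hT)).
  - intros e he; apply NNPP; intros hke; apply hnone; exists e.
    split; [exact he|]; split; [|exact hke].
    revert hu; rewrite <- he; apply hereditaryP; exact hH.
Qed.

Lemma sub_hs_closure_of_inf_paths :
  (forall v, H v -> ~ Tset src rng V v -> ~ inf_emitter src v) ->
  (forall f, inf_path src rng f -> inf_path_in src rng H f ->
     exists n, Tset src rng V (src (f n))) ->
  subset H (hs_closure src rng V).
Proof.
  intros hfin hpath u hu K hK hsat hVK; apply NNPP; intros hku.
  pose proof (Tset_sub_hereditary hK hVK) as hTK.
  destruct (@inf_path_of_step _ _ src rng (fun w => H w /\ ~ K w) u) as [f [hf hin]].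
  - intros w [hw hkw]; apply (escape_edge hK hsat hVK hw hkw).
    apply hfin; auto.
  - auto.
  - destruct (hpath f hf (fun n => conj (proj1 (proj1 (hin n))) (proj1 (proj2 (hin n)))))
      as [n hn].
    exact (proj2 (proj1 (hin n)) (hTK _ hn)).
Qed.

Lemma sub_hs_closure_of_finite_Pv :
  (forall v, H v -> finite_paths (Pv src rng (Tset src rng V) v)) ->
  subset H (hs_closure src rng V).
Proof.
  intros hPv u hu K hK hsat hVK; apply NNPP; intros hku.
  pose proof (Tset_sub_hereditary hK hVK) as hTK.
  assert (hfin : forall w, H w -> ~ Tset src rng V w -> ~ inf_emitter src w).
  { intros w hw hT; apply (finite_Pv_not_inf_emitter (hPv w hw) hT).
    intros e he; apply hHR; revert hw; rewrite <- he; apply hereditaryP; exact hH. }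
  destruct (finite_paths_bounded (hPv u hu)) as [m hm].
  destruct (@long_Pv_of_step _ _ src rng (Tset src rng V) (fun w => H w /\ ~ K w))
    with (n := S m) (u := u) as [es [hes hlen]].
  - intros w [_ hkw] hT; exact (hkw (hTK _ hT)).
  - intros w [hw _]; exact (hHR hw).
  - intros w [hw hkw]; apply (escape_edge hK hsat hVK hw hkw), hfin; auto.
  - auto.
  - specialize (hm _ hes); lia.
Qed.

End Escape.

Theorem lemma2p1 (Vx Ed : Type) (src rng : Ed -> Vx) (V H : Vx -> Prop)
  (hH : hereditary src rng H)
  (hVH : subset (hs_closure src rng V) H)
  (hHR : subset H (Rset src rng (Tset src rng V))) :
  let TV := Tset src rng V in
  let c1 := set_eq H (hs_closure src rng V) in
  let c2 := (forall v, H v -> ~ TV v -> ~ inf_emitter src v) /\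
            (forall f, inf_path src rng f -> inf_path_in src rng H f ->
               exists n, TV (src (f n))) in
  let c3 := forall v, H v -> finite_paths (Pv src rng TV v) in
  (c1 <-> c2) /\ (c1 <-> c3).
Proof.
  intros TV c1 c2 c3.
  assert (hsat : c1 -> forall v, H v -> sat_closure src rng TV v)
    by (intros h1 v hv; apply hs_closure_sub_sat_closure, h1, hv).
  assert (hc1 : subset H (hs_closure src rng V) -> c1)
    by (intros hsub v; split; [apply hsub | apply hVH]).
  split; split.
  - intros h1; split.
    + intros v hv hT; exact (proj2 (sat_closure_regular (hsat h1 v hv) hT)).
    + intros f hf hin; exact (sat_closure_inf_path (hsat h1 _ (proj1 (hin 0))) hf).
  - intros [hfin hpath]; apply hc1, sub_hs_closure_of_inf_paths; auto.
  - intros h1 v hv; exact (sat_closure_finite_Pv (hsat h1 v hv)).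
  - intros hPv; apply hc1, sub_hs_closure_of_finite_Pv; auto.
Qed.
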